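(* $\mathcal{VMU} \subsetneq \mathcal{LEAN} \setminus \{\top\}$.
   Context: Literals come with a fixed-point-free involution $x \mapsto \overline{x}$; variables are positive literals. A clause is a finite set $C$ of literals with $C \cap \overline{C} = \emptyset$; a clause-set is a finite set of clauses; $\top$ is the empty clause-set. $\mathrm{var}(F)$ is the set of variables of $F$. A partial assignment is a map $\varphi : V \to \{0,1\}$ on a finite set $V = \mathrm{var}(\varphi)$ of variables, $\varphi(\overline{v}) = 1 - \varphi(v)$; $F$ is satisfiable iff some partial assignment makes some literal of every clause true. An autarky for $F$ is a partial assignment $\varphi$ such that every clause of $F$ containing a literal falsified by $\varphi$ also contains a literal satisfied by $\varphi$. $\mathcal{LEAN}$ is the class of clause-sets $F$ with no autarky $\varphi$ such that $\mathrm{var}(\varphi) \cap \mathrm{var}(F) \ne \emptyset$. $\mathcal{VMU}$ is the class of unsatisfiable clause-sets $F$ such that every unsatisfiable $F' \subseteq F$ has $\mathrm{var}(F') = \mathrm{var}(F)$. *)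

From mathcomp Require Import all_boot.
From mathcomp Require Import finmap.
Set Implicit Arguments. Unset Strict Implicit. Unset Printing Implicit Defensive.
Local Open Scope fset_scope.
Local Open Scope fmap_scope.

(* Variables are natural numbers (an infinite supply of variables).
   A literal is a pair (v, b): b = true is the positive literal v,
   b = false is its complement.  The involution flips the sign. *)
Definition var := nat.
Definition lit := (var * bool)%type.
Definition compl (x : lit) : lit := (x.1, ~~ x.2).

Definition is_clause (C : {fset lit}) : Prop :=
  forall x, x \in C -> compl x \notin C.

Definition is_clauseset (F : {fset {fset lit}}) : Prop :=
  forall C, C \in F -> is_clause C.

Definition top : {fset {fset lit}} := fset0.

Definition vars (F : {fset {fset lit}}) : {fset var} :=
  [fset x.1 | x in \bigcup_(C <- F) C].

Definition pass := {fmap var -> bool}.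
Definition pvars (phi : pass) : {fset var} := domf phi.

Definition lit_val (phi : pass) (x : lit) : option bool :=
  omap (fun a => a == x.2) phi.[? x.1].

Definition satisfies_lit (phi : pass) (x : lit) : bool := lit_val phi x == Some true.
Definition falsifies_lit (phi : pass) (x : lit) : bool := lit_val phi x == Some false.

Definition satisfiable (F : {fset {fset lit}}) : Prop :=
  exists phi : pass, forall C, C \in F -> exists2 x, x \in C & satisfies_lit phi x.

Definition autarky (phi : pass) (F : {fset {fset lit}}) : Prop :=
  forall C, C \in F ->
    (exists2 x, x \in C & falsifies_lit phi x) ->
    (exists2 x, x \in C & satisfies_lit phi x).

Definition LEAN (F : {fset {fset lit}}) : Prop :=
  is_clauseset F /\
  ~ (exists phi : pass, autarky phi F /\ pvars phi `&` vars F != fset0).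

Definition VMU (F : {fset {fset lit}}) : Prop :=
  is_clauseset F /\ ~ satisfiable F /\
  forall F', F' `<=` F -> ~ satisfiable F' -> vars F' = vars F.

(** If F is VMU and phi is an autarky for F, the clauses of F not touched
    by phi form a subset F' with no variable of phi, and any assignment
    satisfying F' combines with phi into one satisfying F.  So F' is
    unsatisfiable, hence var(F') = var(F), and phi does not touch F: F is
    lean.  Conversely {⊥, {v}, {¬v}} is lean, since an autarky assigning v
    falsifies one of the two unit clauses without satisfying it, but it is
    not VMU because its unsatisfiable subset {⊥} has no variables. *)

From mathcomp Require Import all_boot.
From mathcomp Require Import finmap.

Set Implicit Arguments.
Unset Strict Implicit.
Unset Printing Implicit Defensive.
Local Open Scope fset_scope.
Local Open Scope fmap_scope.

Lemma varsP (F : {fset {fset lit}}) (v : var) :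
  reflect (exists2 C, C \in F & exists2 x, x \in C & x.1 = v) (v \in vars F).
Proof.
apply: (iffP idP).
  case/imfsetP => x /bigfcupP [C /andP[CF _] xC] ->.
  by exists C => //; exists x.
case=> C CF [x xC <-]; apply/imfsetP; exists x => //.
by apply/bigfcupP; exists C; rewrite ?CF.
Qed.

Lemma satisfies_lit_assigned (phi : pass) (x : lit) (xd : x.1 \in domf phi) :
  satisfies_lit phi x = (phi.[xd] == x.2).
Proof.
by rewrite /satisfies_lit /lit_val (in_fnd xd) /=; case: (phi.[xd] == x.2).
Qed.

Lemma falsifies_lit_assigned (phi : pass) (x : lit) (xd : x.1 \in domf phi) :
  falsifies_lit phi x = (phi.[xd] != x.2).
Proof.
by rewrite /falsifies_lit /lit_val (in_fnd xd) /=; case: (phi.[xd] == x.2).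
Qed.

Lemma satisfies_lit_catf (psi phi : pass) (x : lit) :
  satisfies_lit (psi + phi) x =
  if x.1 \in domf phi then satisfies_lit phi x else satisfies_lit psi x.
Proof. by rewrite /satisfies_lit /lit_val fnd_cat; case: ifP. Qed.

Lemma satisfiable_top : satisfiable top.
Proof. by exists [fmap] => C; rewrite in_fset0. Qed.

Lemma unsat_empty_clause (F : {fset {fset lit}}) :
  fset0 \in F -> ~ satisfiable F.
Proof. by move=> F0 [phi /(_ _ F0) [x]]; rewrite in_fset0. Qed.

Section AutarkyReduct.

Variables (phi : pass) (F : {fset {fset lit}}).

Definition touches (C : {fset lit}) : bool :=
  has (fun x : lit => x.1 \in domf phi) C.

Definition autarky_reduct : {fset {fset lit}} := [fset C in F | ~~ touches C].

Lemma autarky_reduct_sub : autarky_reduct `<=` F.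
Proof. by apply/fsubsetP => C; rewrite inE => /andP[]. Qed.

Lemma disjoint_vars_autarky_reduct : pvars phi `&` vars autarky_reduct = fset0.
Proof.
apply/eqP/fset0Pn => -[v]; rewrite in_fsetI => /andP[vd /varsP [C]].
rewrite inE => /andP[_ /hasPn untouched] [x xC xv].
by move: (untouched x xC); rewrite xv vd.
Qed.

Hypothesis aut : autarky phi F.

(* In [psi + phi] the values of phi win: touched clauses are satisfied by
   the autarky, untouched ones by psi. *)
Lemma satisfiable_autarky_reduct : satisfiable autarky_reduct -> satisfiable F.
Proof.
case=> psi sat_psi; exists (psi + phi) => C CF.
have [/hasP [x xC xd] | untouched] := boolP (touches C).
  have [y yC sy] : exists2 y, y \in C & satisfies_lit phi y.
    have [sx | fx] := boolP (satisfies_lit phi x); first by exists x.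
    apply: aut => //; exists x => //.
    by move: fx; rewrite satisfies_lit_assigned falsifies_lit_assigned.
  exists y => //; rewrite satisfies_lit_catf.
  case: ifP => // /negbT yd.
  by move: sy; rewrite /satisfies_lit /lit_val not_fnd.
have [|x xC sx] := sat_psi C; first by rewrite !inE CF.
exists x => //; rewrite satisfies_lit_catf ifF //.
by apply/negbTE; apply: contra untouched => xd; apply/hasP; exists x.
Qed.

End AutarkyReduct.

Lemma VMU_LEAN (F : {fset {fset lit}}) : VMU F -> LEAN F.
Proof.
case=> cs [unsat varsF]; split=> // -[phi [aut touch]].
have unsat' : ~ satisfiable (autarky_reduct phi F).
  by move/(satisfiable_autarky_reduct aut).
move: touch; rewrite -(varsF _ (autarky_reduct_sub phi F) unsat').
by rewrite disjoint_vars_autarky_reduct eqxx.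
Qed.

Lemma VMU_neq_top (F : {fset {fset lit}}) : VMU F -> F <> top.
Proof.
by case=> _ [unsat _] FE; apply: unsat; rewrite FE; apply: satisfiable_top.
Qed.

(* Whatever value phi gives to v, one of the two unit clauses on v is
   falsified and has no other literal to be satisfied by. *)
Lemma autarky_unit_pair (phi : pass) (F : {fset {fset lit}}) (v : var) :
  autarky phi F -> [fset (v, true)] \in F -> [fset (v, false)] \in F ->
  v \notin pvars phi.
Proof.
move=> aut Fpos Fneg; apply/negP => vd.
have Fv : [fset (v, ~~ phi.[vd])] \in F by case: (phi.[vd]).
have [|y] := aut _ Fv.
  exists (v, ~~ phi.[vd]); first exact: fset11.
  rewrite (@falsifies_lit_assigned phi (v, ~~ phi.[vd]) vd) /=.
  by case: (phi.[vd]).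
rewrite inE => /eqP ->.
rewrite (@satisfies_lit_assigned phi (v, ~~ phi.[vd]) vd) /=.
by case: (phi.[vd]).
Qed.

Definition empty_and_unit_pair : {fset {fset lit}} :=
  [fset fset0; [fset (0, true)]; [fset (0, false)]].

Lemma vars_empty_and_unit_pair (v : var) :
  (v \in vars empty_and_unit_pair) = (v == 0).
Proof.
apply/varsP/eqP => [[C] | ->].
  by rewrite !inE => /orP[/orP[]|] /eqP -> [x]; rewrite !inE // => /eqP -> <-.
exists [fset (0, true)]; first by rewrite !inE eqxx orbT.
by exists (0, true); rewrite ?inE.
Qed.

Lemma LEAN_empty_and_unit_pair : LEAN empty_and_unit_pair.
Proof.
split.
  move=> C; rewrite !inE => /orP[/orP[]|] /eqP -> x; rewrite ?inE //.
    by move/eqP ->.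
  by move/eqP ->.
case=> phi [aut /fset0Pn [v]]; rewrite in_fsetI vars_empty_and_unit_pair.
case/andP => vd /eqP v0; subst v; move: vd; apply/negP.
by apply: (autarky_unit_pair aut); rewrite !inE eqxx ?orbT.
Qed.

Lemma not_VMU_empty_and_unit_pair : ~ VMU empty_and_unit_pair.
Proof.
case=> _ [_ varsF].
have sub : [fset fset0] `<=` empty_and_unit_pair.
  by apply/fsubsetP => C; rewrite !inE => ->.
have vars0 := varsF _ sub (unsat_empty_clause (fset11 _)).
have /varsP [C] : 0 \in vars [fset fset0].
  by rewrite vars0 vars_empty_and_unit_pair.
by rewrite inE => /eqP -> [x]; rewrite in_fset0.
Qed.

Theorem lemma4p3 :
  (forall F : {fset {fset lit}}, VMU F -> LEAN F /\ F <> top) /\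
  (exists F : {fset {fset lit}}, LEAN F /\ F <> top /\ ~ VMU F).
Proof.
split=> [F VMU_F | ].
  by split; [apply: VMU_LEAN | apply: VMU_neq_top].
exists empty_and_unit_pair; split; first exact: LEAN_empty_and_unit_pair.
split; last exact: not_VMU_empty_and_unit_pair.
by move/(congr1 (fun s => fset0 \in s)); rewrite in_fset0 !inE.
Qed.
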